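(* Let $k$ be a field of characteristic zero and let $N$ be a normal subgroup of $GA_3$ containing all diagonal automorphisms of $k^3$. Then the Nagata automorphism $$F=\big(X-2(Y^2+XZ)Y-(Y^2+XZ)^2Z,\ Y+(Y^2+XZ)Z,\ Z\big)$$ belongs to $N$.
   Context: $GA_3$ is the group (under composition) of polynomial automorphisms $G=(G_1,G_2,G_3)$ of $k^3$, with $G_i\in k[X,Y,Z]$. An automorphism is diagonal if it has the form $(c_1X,c_2Y,c_3Z)$ with $c_1,c_2,c_3\in k\setminus\{0\}$. *)

From HB Require Import structures.
From mathcomp Require Import all_boot all_algebra.
From mathcomp Require Import mpoly.
Set Implicit Arguments. Unset Strict Implicit. Unset Printing Implicit Defensive.
Import GRing.Theory.
Local Open Scope ring_scope.

(* A polynomial endomorphism G = (G_1,G_2,G_3) of k^3, with G_i in k[X,Y,Z]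
   (variables X,Y,Z are 'X_0,'X_1,'X_2 of {mpoly k[3]}). *)
Definition polymap3 (k : fieldType) := 3.-tuple {mpoly k[3]}.

Definition pcomp (k : fieldType) (F G : polymap3 k) : polymap3 k :=
  [tuple comp_mpoly G (tnth F i) | i < 3].

Definition pid (k : fieldType) : polymap3 k := [tuple 'X_i | i < 3].

Definition is_inverse (k : fieldType) (F G : polymap3 k) : Prop :=
  pcomp F G = pid k /\ pcomp G F = pid k.

Definition in_GA3 (k : fieldType) (F : polymap3 k) : Prop :=
  exists G, is_inverse F G.

Definition normal_subgroup_GA3 (k : fieldType) (N : polymap3 k -> Prop) : Prop :=
  [/\ (forall F, N F -> in_GA3 F),
      N (pid k),
      (forall F G, N F -> N G -> N (pcomp F G)),
      (forall F G, N F -> is_inverse F G -> N G)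
    & (forall H Hi F, is_inverse H Hi -> N F -> N (pcomp (pcomp H F) Hi))].

Definition diag_aut (k : fieldType) (c1 c2 c3 : k) : polymap3 k :=
  [tuple c1 *: 'X_0; c2 *: 'X_1; c3 *: 'X_2].

Definition nagata (k : fieldType) : polymap3 k :=
  let X : {mpoly k[3]} := 'X_0 in
  let Y : {mpoly k[3]} := 'X_1 in
  let Z : {mpoly k[3]} := 'X_2 in
  let D := Y ^+ 2 + X * Z in
  [tuple X - 2%:R * D * Y - D ^+ 2 * Z; Y + D * Z; Z].

Definition char0 (k : fieldType) : Prop := [pchar k] =i pred0.

From HB Require Import structures.
From mathcomp Require Import all_boot all_algebra.
From mathcomp Require Import mpoly ring.
Set Implicit Arguments. Unset Strict Implicit. Unset Printing Implicit Defensive.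
Local Open Scope ring_scope.
Import GRing.Theory.

(* With D = Y^2 + XZ, the maps
     E(t) = (X - 2tDY - t^2 D^2 Z, Y + tDZ, Z)
   form a one-parameter subgroup of GA_3 with E(1) the Nagata automorphism, and
   conjugating E(t) by the diagonal map (X, uY, u^2 Z) gives E(t u^3).  Hence the
   commutator of E(1) with that diagonal map, which lies in any normal subgroup
   containing the diagonal automorphisms, is E(1 - u^3).  Taking u = -1 and
   u = 2 (here 2 != 0 is where the characteristic enters) gives E(2) and E(-7),
   and E(1) = E(2)^4 E(-7). *)

Section CompMpoly.
Variables (R : comNzRingType) (n m : nat) (lq : n.-tuple {mpoly R[m]}).
Implicit Types p q : {mpoly R[n]}.

Lemma comp_mpolyM p q : (p * q) \mPo lq = (p \mPo lq) * (q \mPo lq).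
Proof. exact: rmorphM. Qed.

Lemma comp_mpolyXn p e : (p ^+ e) \mPo lq = (p \mPo lq) ^+ e.
Proof. exact: rmorphXn. Qed.

Lemma comp_mpoly_nat e : (e%:R : {mpoly R[n]}) \mPo lq = e%:R.
Proof. exact: rmorph_nat. Qed.

Definition comp_mpoly_ringE :=
  (comp_mpolyD, comp_mpolyB, comp_mpolyN, comp_mpolyM, comp_mpolyXn, comp_mpoly_nat,
   comp_mpolyC, comp_mpolyXU).

End CompMpoly.

Lemma comp_mpolyA (R : comNzRingType) (n m r : nat) (p : {mpoly R[n]})
    (lp : n.-tuple {mpoly R[m]}) (lq : m.-tuple {mpoly R[r]}) :
  (p \mPo lp) \mPo lq = p \mPo [tuple tnth lp i \mPo lq | i < n].
Proof.
rewrite (comp_mpolyEX p lp) (comp_mpolyEX p) raddf_sum; apply: eq_bigr => m' _.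
rewrite /= comp_mpolyZ !comp_mpolyX rmorph_prod; congr (_ *: _).
by apply: eq_bigr => i _; rewrite rmorphXn tnth_mktuple.
Qed.

Section PolyMap3.
Variable k : fieldType.
Implicit Types (F G H : polymap3 k) (a b c : {mpoly k[3]}).

Lemma pcompA F G H : pcomp (pcomp F G) H = pcomp F (pcomp G H).
Proof.
by apply: eq_from_tnth => i; rewrite !tnth_mktuple comp_mpolyA.
Qed.

Lemma pcomp_tuple a b c G :
  pcomp [tuple a; b; c] G = [tuple a \mPo G; b \mPo G; c \mPo G].
Proof. by apply: eq_from_tnth => -[[|[|[|//]]] i]; rewrite tnth_mktuple. Qed.

Lemma pidE : pid k = [tuple 'X_0; 'X_1; 'X_2].
Proof.
apply: eq_from_tnth => i; rewrite tnth_mktuple (tnth_nth 0).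
by case: i => -[|[|[|//]]] ?; congr 'X__; apply: val_inj.
Qed.

(* E(t) = exp(t D delta) for the locally nilpotent derivation
   delta = Z d/dY - 2Y d/dX, whose kernel contains D = Y^2 + XZ. *)
Definition nagata_exp (t : k) : polymap3 k :=
  let X : {mpoly k[3]} := 'X_0 in
  let Y : {mpoly k[3]} := 'X_1 in
  let Z : {mpoly k[3]} := 'X_2 in
  let D := Y ^+ 2 + X * Z in
  [tuple X - 2%:R * t%:MP * D * Y - t%:MP ^+ 2 * D ^+ 2 * Z; Y + t%:MP * D * Z; Z].

Lemma nagata_expD s t :
  pcomp (nagata_exp s) (nagata_exp t) = nagata_exp (s + t).
Proof.
rewrite /nagata_exp pcomp_tuple !comp_mpoly_ringE /= mpolyCD.
congr [tuple _; _; _]; ring.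
Qed.

Lemma nagata_exp0 : nagata_exp 0 = pid k.
Proof. by rewrite pidE /nagata_exp; congr [tuple _; _; _]; ring. Qed.

Lemma nagata_exp_inverse t : is_inverse (nagata_exp t) (nagata_exp (- t)).
Proof. by split; rewrite nagata_expD ?subrr ?addNr nagata_exp0. Qed.

Lemma nagata_exp1 : nagata_exp 1 = nagata k.
Proof. by rewrite /nagata_exp /nagata; congr [tuple _; _; _]; ring. Qed.

Lemma conj_diag_nagata_exp (u v t : k) : v * u = 1 ->
  pcomp (pcomp (diag_aut 1 v (v ^+ 2)) (nagata_exp t)) (diag_aut 1 u (u ^+ 2)) =
  nagata_exp (t * u ^+ 3).
Proof.
move=> vu; have vuMP : v%:MP * u%:MP = 1 :> {mpoly k[3]} by rewrite -mpolyCM vu.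
rewrite /nagata_exp /diag_aut !pcomp_tuple !(comp_mpoly_ringE, comp_mpolyZ) /=.
by rewrite -!mul_mpolyC; congr [tuple _; _; _]; ring: vuMP.
Qed.

End PolyMap3.

Section NormalSubgroup.
Variables (k : fieldType) (N : polymap3 k -> Prop).
Hypothesis N_normal : normal_subgroup_GA3 N.
Hypothesis N_diag : forall c1 c2 c3 : k,
  c1 != 0 -> c2 != 0 -> c3 != 0 -> N (diag_aut c1 c2 c3).

Lemma N_pcomp F G : N F -> N G -> N (pcomp F G).
Proof. by case: N_normal => _ _ N_comp _ _; apply: N_comp. Qed.

Lemma N_nagata_expD s t :
  N (nagata_exp s) -> N (nagata_exp t) -> N (nagata_exp (s + t)).
Proof. by rewrite -nagata_expD; apply: N_pcomp. Qed.

Lemma N_nagata_exp_commutator (u : k) : u != 0 -> N (nagata_exp (1 - u ^+ 3)).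
Proof.
move=> u_neq0; case: N_normal => _ _ _ _ N_conj.
have uV_neq0 : u^-1 != 0 by rewrite invr_eq0.
have N_diag_u c : c != 0 -> N (diag_aut 1 c (c ^+ 2)).
  by move=> c_neq0; apply: N_diag; rewrite ?oner_eq0 ?expf_neq0.
have N_conj_diag : N (pcomp (pcomp (nagata_exp 1) (diag_aut 1 u^-1 (u^-1 ^+ 2)))
                            (nagata_exp (- 1))).
  by apply: N_conj; [exact: nagata_exp_inverse | exact: N_diag_u].
have := N_pcomp N_conj_diag (N_diag_u u u_neq0).
by rewrite !pcompA -(pcompA (diag_aut _ _ _)) conj_diag_nagata_exp ?mulVf //
  nagata_expD mulN1r.
Qed.

End NormalSubgroup.

Theorem mainTheorem4 (k : fieldType) (N : polymap3 k -> Prop) :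
  char0 k ->
  normal_subgroup_GA3 N ->
  (forall c1 c2 c3 : k, c1 != 0 -> c2 != 0 -> c3 != 0 -> N (diag_aut c1 c2 c3)) ->
  N (nagata k).
Proof.
move=> k_char0 N_normal N_diag.
have two_neq0 : 2%:R != 0 :> k by move/pcharf0P: k_char0 => ->.
have N_E2 : N (nagata_exp 2%:R).
  rewrite (_ : 2%:R = 1 - (-1) ^+ 3); last by ring.
  by apply: N_nagata_exp_commutator; rewrite ?oppr_eq0 ?oner_eq0.
have N_E4 := N_nagata_expD N_normal N_E2 N_E2.
have N_E8 := N_nagata_expD N_normal N_E4 N_E4.
have N_Em7 := N_nagata_exp_commutator N_normal N_diag two_neq0.
rewrite -nagata_exp1 (_ : 1 = 2%:R + 2%:R + (2%:R + 2%:R) + (1 - 2%:R ^+ 3)).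
  exact: N_nagata_expD.
by ring.
Qed.
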